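(* Let $0\le r\le q^2$. If there exists a line spread $\mathcal F$ of $\mathrm{PG}(3,q)$ having exactly $r$ lines in common with the Desarguesian spread $\mathcal D$, then $\mathrm{PG}(3,q)$ admits a mixed partition of type $r$.
   Context: Let $q$ be a prime power, $F=\mathbb F_q$, $L=\mathbb F_{q^4}$, regarded as a 4-dimensional $F$-vector space; $\mathrm{PG}(3,q)$ has as points the one-dimensional subspaces $Fx$, $x\in L^*$, and as lines the two-dimensional $F$-subspaces (identified with their point sets). Let $C$ be the subfield of $L$ of order $q^2$ and $\mathcal D=\{Cx:x\in L^*\}$ the Desarguesian line spread. A line spread is a set of lines partitioning the point set. For $r\ge1$, a set $X$ of points of a projective space $\mathrm{PG}(V)$ over $F$ is the image of an $r$-uple embedding if there is an injective $F$-linear map $\phi:F^{r+1}\to V$ with $X=\{F\phi(t_0^r,t_0^{r-1}t_1,\dots,t_1^r):(t_0,t_1)\in F^2\setminus\{(0,0)\}\}$. A mixed partition of type $r$ of $\mathrm{PG}(3,q)$ ($0\le r\le q^2$) is a partition of its point set into $r$ lines and $q^2+1-r$ sets each of which is the image of a $3$-uple embedding (normal rational curves of order three, i.e. twisted cubics, when $q\ge3$). *)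

From Stdlib Require Lists.List.
From HB Require Import structures.
From mathcomp Require Import all_boot all_order all_algebra all_field.
Set Implicit Arguments. Unset Strict Implicit. Unset Printing Implicit Defensive.
Import GRing.Theory.
Local Open Scope ring_scope.

Section PG3.
Variables (F : finFieldType) (L : fieldExtType F).

(* points of PG(L) over F : one-dimensional F-subspaces *)
Definition is_point (P : {vspace L}) : bool := \dim P == 1%N.
Definition is_line (U : {vspace L}) : bool := \dim U == 2%N.

Definition pts_of (U : {vspace L}) : pred {vspace L} :=
  fun P => is_point P && (P <= U)%VS.

(* a finite family of point sets partitions the point set: every point lies
   in exactly one member (counted with multiplicity) *)
Definition partitions_points (parts : seq (pred {vspace L})) : Prop :=
  forall P : {vspace L}, is_point P -> count (fun X => X P) parts = 1%N.

Definition line_spread (S : seq {vspace L}) : Prop :=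
  all is_line S /\ partitions_points (map pts_of S).

(* the Desarguesian line spread {C x : x in L^*} *)
Definition in_desarg (C : {subfield L}) (U : {vspace L}) : Prop :=
  exists x : L, x != 0 /\ U = (C * <[x]>)%VS.

Definition nu3 (t0 t1 : F) : 'rV[F]_4 :=
  \row_(i < 4) (t0 ^+ (3 - i) * t1 ^+ i).

Definition is_3uple_image (X : pred {vspace L}) : Prop :=
  exists phi : 'rV[F]_4 -> L,
    [/\ linear phi, injective phi &
        forall P : {vspace L},
          X P = [exists t : F * F, (t != (0, 0)) && (P == <[phi (nu3 t.1 t.2)]>%VS)]].

Definition mixed_partition (r : nat) : Prop :=
  exists (ls : seq {vspace L}) (cs : seq (pred {vspace L})),
    [/\ size ls = r, all is_line ls,
        size cs = ((#|F| ^ 2).+1 - r)%N,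
        (forall X, Stdlib.Lists.List.In X cs -> is_3uple_image X) &
        partitions_points (map pts_of ls ++ cs)].

End PG3.

From HB Require Import structures.
From mathcomp Require Import all_boot all_order all_algebra all_field.
From mathcomp Require Import ring zify.
Set Implicit Arguments. Unset Strict Implicit. Unset Printing Implicit Defensive.
Import GRing.Theory.
Local Open Scope ring_scope.

(* The mixed partition is obtained by inverting the spread.  The inversion
   x |-> x^-1 of L^* induces a permutation of the points of PG(3,q) (the
   point Fx goes to Fx^-1), so it maps the r + (q^2 + 1 - r) lines of a line
   spread S onto a partition of the point set:
   - a line Cx of the Desarguesian spread D goes to the line Cx^-1;
   - any other line can be written <u, wu> with w outside C.  Then w has
     degree 4 over F, with minimal polynomial m, and the inverse of the line
     consists of the points F((a + bw)u)^-1.  Dividing m by X - w gives a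
     cubic cofactor, which yields an injective F-linear map phi : F^4 -> L
     with (a + bw) * phi(a^3, a^2 b, a b^2, b^3) = b^4 m(-a/b) in F^*; hence
     the inverse of the line is the image of a 3-uple embedding. *)

Section Inversion.
Variables (F : finFieldType) (L : fieldExtType F).
Implicit Types (P U : {vspace L}) (C : {subfield L}) (x y : L).

Lemma vlineZ (k : F) x : k != 0 -> (<[k *: x]> = <[x]>)%VS.
Proof.
move=> k0; apply/eqP; rewrite eqEdim -memvE memvZ ?memv_line //= !dim_vline.
by rewrite scaler_eq0 (negPf k0).
Qed.

Lemma point_vpick P : is_point P -> vpick P != 0 /\ P = <[vpick P]>%VS.
Proof.
move=> /eqP dP; have nz : vpick P != 0.
  by rewrite vpick0; apply/eqP => P0; move: dP; rewrite P0 dimv0.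
split=> //; apply/eqP; rewrite eq_sym eqEdim -memvE memv_pick dP dim_vline nz //.
Qed.

Lemma is_point_line x : x != 0 -> is_point <[x]>%VS.
Proof. by move=> nz; rewrite /is_point dim_vline nz. Qed.

Definition inv_point P : {vspace L} := <[(vpick P)^-1]>%VS.

Lemma inv_point_line x : x != 0 -> inv_point <[x]>%VS = <[x^-1]>%VS.
Proof.
move=> nz; have [nzp _] := point_vpick (is_point_line nz).
have /vlineP[k Dk] := memv_pick <[x]>%VS.
move: nzp; rewrite /inv_point Dk scaler_eq0 negb_or => /andP[k0 _].
have algV : (k%:A)^-1 = (k^-1)%:A :> L by rewrite -!in_algE fmorphV.
by rewrite -mulr_algl invfM algV mulr_algl vlineZ ?invr_eq0.
Qed.

Lemma inv_point_point P : is_point P -> is_point (inv_point P).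
Proof. by move=> /point_vpick[nz _]; rewrite is_point_line // invr_eq0. Qed.

(* The points P whose inverse lies on U; as the inversion is an involution
   this is the image of the point set of U under the inversion. *)
Definition inverted U : pred {vspace L} :=
  fun P => is_point P && pts_of U (inv_point P).

Lemma memv_coset C x y : x != 0 -> (y \in (C * <[x]>)%VS) = (y / x \in C).
Proof.
move=> nz; apply/memv_cosetP/idP => [[c Cc ->]|Cy]; first by rewrite mulfK.
by exists (y / x); rewrite ?divfK.
Qed.

Lemma dim_coset C x : x != 0 -> \dim (C * <[x]>) = \dim C.
Proof. by move=> nz; rewrite dim_cosetv_unit // unitfE. Qed.

Lemma coset_rep C x z : x != 0 -> z != 0 ->
  z \in (C * <[x]>)%VS -> (C * <[z]> = C * <[x]>)%VS.
Proof.
move=> nx nz; rewrite memv_coset // => Czx.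
apply/eqP; rewrite eqEdim !dim_coset // leqnn andbT.
apply/subvP => y; rewrite !memv_coset // => Cyz.
have -> : y / x = (y / z) * (z / x) by rewrite mulrA divfK.
exact: rpredM.
Qed.

(* The inversion maps the Desarguesian line Cx onto the Desarguesian line
   Cx^-1, since y/x lies in C iff y^-1/x^-1 does. *)
Lemma inverted_coset C x : x != 0 -> inverted (C * <[x]>) =1 pts_of (C * <[x^-1]>).
Proof.
move=> nx P; rewrite /inverted /pts_of; case pP: (is_point P) => //=.
have [ny DP] := point_vpick pP.
rewrite inv_point_point //= {2}DP -!memvE !memv_coset ?invr_eq0 //.
by rewrite invrK -invfM memvV.
Qed.

Lemma desarg_vpick C U : in_desarg C U -> vpick U != 0 /\ U = (C * <[vpick U]>)%VS.
Proof.
move=> [x [nx ->]]; have xU : x \in (C * <[x]>)%VS by rewrite memv_coset ?divff ?mem1v.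
have nz : vpick (C * <[x]>)%VS != 0.
  by rewrite vpick0; apply: contraTneq xU => ->; rewrite memv0.
by split => //; rewrite (coset_rep nx nz) // memv_pick.
Qed.

Definition desarg_inv C U : {vspace L} := (C * <[(vpick U)^-1]>)%VS.

Lemma dim_desarg_inv C U : in_desarg C U -> \dim (desarg_inv C U) = \dim C.
Proof. by move=> /desarg_vpick[nz _]; rewrite dim_coset // invr_eq0. Qed.

Lemma pts_desarg_inv C U : in_desarg C U -> pts_of (desarg_inv C U) =1 inverted U.
Proof. by move=> /desarg_vpick[nz {2}->] P; rewrite inverted_coset. Qed.

End Inversion.

Section TwistedCubic.
Variables (F : finFieldType) (L : fieldExtType F) (w : L).
Hypothesis deg_w : adjoin_degree 1%AS w = 4%N.

Local Notation base := (1%AS : {subfield L}).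
Local Notation m := (minPoly base w).

Lemma minPoly_coef_base i : m`_i \in base.
Proof. exact/polyOverP/minPolyOver. Qed.

Lemma minPoly_root : m`_0 + m`_1 * w + m`_2 * w ^+ 2 + m`_3 * w ^+ 3 + w ^+ 4 = 0.
Proof.
have lead4 : m`_4 = 1.
  by have := monicP (monic_minPoly base w); rewrite lead_coefE size_minPoly deg_w.
have := minPolyxx base w; rewrite horner_coef size_minPoly deg_w.
by rewrite !big_ord_recr big_ord0 /= add0r lead4 expr0 mulr1 expr1 mul1r.
Qed.

Lemma powers_free {d0 d1 d2 d3 : L} :
  d0 \in base -> d1 \in base -> d2 \in base -> d3 \in base ->
  d0 + d1 * w + d2 * w ^+ 2 + d3 * w ^+ 3 = 0 ->
  [/\ d0 = 0, d1 = 0, d2 = 0 & d3 = 0].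
Proof.
move=> h0 h1 h2 h3 E; pose p := \poly_(i < 4) [:: d0; d1; d2; d3]`_i.
have cp i : p`_i = [:: d0; d1; d2; d3]`_i.
  by rewrite coef_poly; case: ltnP => // hi; rewrite nth_default.
suff p0 : p = 0.
  by split; [move: (cp 0%N) | move: (cp 1%N) | move: (cp 2%N) | move: (cp 3%N)];
    rewrite p0 coef0.
apply/eqP; apply: contraT => np.
have pF : p \is a polyOver base.
  by apply/polyOverP => i; rewrite cp; case: i => [|[|[|[|i]]]] //=; rewrite nth_nil rpred0.
have pw : root p w.
  by rewrite /root horner_poly !big_ord_recr big_ord0 /= add0r expr0 mulr1 expr1 E.
have := dvdp_leq np (minPoly_dvdp pF pw); rewrite size_minPoly deg_w.
by move=> /leq_trans /(_ (size_poly _ _)).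
Qed.

Lemma alg_base (k : F) : k%:A \in base.
Proof. by rewrite rpredZ // mem1v. Qed.

Lemma alg_eq0 (k : F) : (k%:A == 0 :> L) = (k == 0).
Proof. by rewrite -in_algE fmorph_eq0. Qed.

(* Writing m = (X - w) (X^3 + g2 X^2 + g1 X + g0), the cubic map sends
   (t0^3, t0^2 t1, t0 t1^2, t1^3) to t0^3 - g2 t0^2 t1 + g1 t0 t1^2 - g0 t1^3. *)
Definition g2 : L := m`_3 + w.
Definition g1 : L := w ^+ 2 + m`_3 * w + m`_2.
Definition g0 : L := w ^+ 3 + m`_3 * w ^+ 2 + m`_2 * w + m`_1.

Definition i0 : 'I_4 := @Ordinal 4 0 isT.
Definition i1 : 'I_4 := @Ordinal 4 1 isT.
Definition i2 : 'I_4 := @Ordinal 4 2 isT.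
Definition i3 : 'I_4 := @Ordinal 4 3 isT.

Definition cubic_map (v : 'rV[F]_4) : L :=
  (v 0 i0)%:A - (v 0 i1)%:A * g2 + (v 0 i2)%:A * g1 - (v 0 i3)%:A * g0.

Lemma cubic_map_linear : linear cubic_map.
Proof.
move=> k x y; rewrite -[k *: cubic_map x]mulr_algl /cubic_map !mxE.
rewrite -!in_algE !rmorphD !rmorphM /=; ring.
Qed.

(* The binary quartic form b^4 m(-a/b), with values in F. *)
Definition norm_form (a b : F) : L :=
  a%:A ^+ 4 - m`_3 * a%:A ^+ 3 * b%:A + m`_2 * a%:A ^+ 2 * b%:A ^+ 2
  - m`_1 * a%:A * b%:A ^+ 3 + m`_0 * b%:A ^+ 4.

Lemma norm_form_base a b : norm_form a b \in base.
Proof.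
by rewrite /norm_form ?(rpredD, rpredN, rpredM, rpredX) ?alg_base ?minPoly_coef_base.
Qed.

(* On the 3-uple embedding, the cubic map is an inverse of a + bw up to the
   scalar norm_form a b; the difference is -b^4 m(w) = 0. *)
Lemma cubic_map_nu3 (a b : F) : (a%:A + b%:A * w) * cubic_map (nu3 a b) = norm_form a b.
Proof.
rewrite /cubic_map /nu3 !mxE /= -!in_algE !rmorphM !rmorphXn /= ?in_algE.
apply/eqP; rewrite -subr_eq0; apply/eqP.
transitivity (- b%:A ^+ 4 *
  (m`_0 + m`_1 * w + m`_2 * w ^+ 2 + m`_3 * w ^+ 3 + w ^+ 4) : L).
  by rewrite /norm_form /g2 /g1 /g0; ring.
by rewrite minPoly_root mulr0.
Qed.

(* The cubic map is injective: its value, expanded in the basis 1, w, w^2, w^3,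
   has triangular coefficients in the coordinates of v. *)
Lemma cubic_map_eq0 v : cubic_map v = 0 -> v = 0.
Proof.
move=> v0; pose x k := (v 0 k)%:A : L.
have E : (x i0 - x i1 * m`_3 + x i2 * m`_2 - x i3 * m`_1)
    + (- x i1 + x i2 * m`_3 - x i3 * m`_2) * w
    + (x i2 - x i3 * m`_3) * w ^+ 2 + (- x i3) * w ^+ 3 = 0.
  by rewrite -[RHS]v0 /cubic_map /g2 /g1 /g0 /x; ring.
have [||||e0 e1 e2 e3] := powers_free _ _ _ _ E;
  rewrite ?(rpredD, rpredN, rpredM) ?alg_base ?minPoly_coef_base //.
have x3 : x i3 = 0 by rewrite -[x i3]opprK e3 oppr0.
have x2 : x i2 = 0 by move: e2; rewrite x3 mul0r subr0.
have x1 : x i1 = 0.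
  by move: e1; rewrite x2 x3 !mul0r subr0 addr0 => /eqP; rewrite oppr_eq0 => /eqP.
have x0 : x i0 = 0 by move: e0; rewrite x1 x2 x3 !mul0r !subr0 addr0.
have xk k : x k = 0 -> v 0 k = 0 by move/eqP; rewrite alg_eq0 => /eqP.
apply/rowP => -[[|[|[|[|k]]]] hk] //; rewrite mxE.
- by rewrite (_ : Ordinal hk = i0) ?xk //; apply: val_inj.
- by rewrite (_ : Ordinal hk = i1) ?xk //; apply: val_inj.
- by rewrite (_ : Ordinal hk = i2) ?xk //; apply: val_inj.
- by rewrite (_ : Ordinal hk = i3) ?xk //; apply: val_inj.
Qed.

(* Since w has degree 4 > 1, a + bw vanishes only for a = b = 0. *)
Lemma pencil_vec_neq0 (a b : F) : (a, b) != (0, 0) -> a%:A + b%:A * w != 0.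
Proof.
move=> nab; apply/eqP => z0.
have E : a%:A + b%:A * w + 0 * w ^+ 2 + 0 * w ^+ 3 = 0 by rewrite !mul0r !addr0.
have [||||/eqP a0 /eqP b0 _ _] := powers_free _ _ _ _ E; rewrite ?alg_base ?rpred0 //.
by move: nab a0 b0; rewrite !alg_eq0 => /[swap] /eqP-> /[swap] /eqP->; rewrite eqxx.
Qed.

Lemma nu3_neq0 (a b : F) : (a, b) != (0, 0) -> nu3 a b != 0.
Proof.
move=> nab; apply/eqP => /rowP h; move: nab.
have := h i0; have := h i3; rewrite !mxE /= !expr0 mulr1 mul1r => /eqP.
by rewrite expf_eq0 /= => /eqP -> /eqP; rewrite expf_eq0 /= => /eqP ->; rewrite eqxx.
Qed.

(* Key identity: the cubic map sends nu3(a, b) to a nonzero F-multiple of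
   (a + bw)^-1, because their product is the nonzero scalar norm_form a b. *)
Lemma cubic_map_nu3_inv (a b : F) : (a, b) != (0, 0) ->
  exists2 k : F, k != 0 & cubic_map (nu3 a b) = k *: (a%:A + b%:A * w)^-1.
Proof.
move=> nab; have nz := pencil_vec_neq0 nab.
have nphi : cubic_map (nu3 a b) != 0.
  by apply: contra (nu3_neq0 nab) => /eqP/cubic_map_eq0->.
have /vlineP[k Ek] := norm_form_base a b; rewrite -cubic_map_nu3 in Ek.
have Ek' : cubic_map (nu3 a b) = k *: (a%:A + b%:A * w)^-1.
  by rewrite -[k *: _]mulr_algl -Ek mulrC mulKf.
exists k => //; apply: contra nphi => /eqP k0.
by rewrite Ek' k0 scale0r.
Qed.

Lemma pencil_memP u z :
  reflect (exists a b : F, z = (a%:A + b%:A * w) * u) (z \in <[u]> + <[w * u]>)%VS.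
Proof.
apply: (iffP memv_addP) => [[_ /vlineP[a ->] [_ /vlineP[b ->] ->]]|[a [b ->]]].
  by exists a, b; rewrite -[a *: u]mulr_algl -[b *: _]mulr_algl; ring.
exists (a *: u); first exact: memvZ (memv_line u).
exists (b *: (w * u)); first exact: memvZ (memv_line _).
by rewrite -[a *: u]mulr_algl -[b *: (w * u)]mulr_algl; ring.
Qed.

(* The inversion maps the line <u, wu> onto the twisted cubic parametrized by
   (a : b) |-> F (u^-1 * cubic_map (nu3 a b)) = F ((a + bw) u)^-1. *)
Lemma inverted_pencil u (P : {vspace L}) : u != 0 ->
  inverted (<[u]> + <[w * u]>) P =
  [exists t : F * F, (t != (0, 0)) && (P == <[u^-1 * cubic_map (nu3 t.1 t.2)]>%VS)].
Proof.
move=> nu; apply/idP/existsP.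
- case/andP => pP /andP[_]; have [ny DP] := point_vpick pP.
  rewrite -memvE => /pencil_memP[a [b Ey]].
  have nab : (a, b) != (0, 0).
    apply: contra ny => /eqP[a0 b0]; move: Ey; rewrite a0 b0 scale0r mul0r add0r mul0r.
    by move/eqP; rewrite invr_eq0.
  exists (a, b); rewrite nab /=; have [k k0 ->] := cubic_map_nu3_inv nab.
  by rewrite -scalerAr -invfM mulrC -Ey invrK vlineZ // -DP.
- case=> -[a b] /andP[nab /eqP ->] /=.
  have [k k0 ->] := cubic_map_nu3_inv nab; have nz := pencil_vec_neq0 nab.
  rewrite -scalerAr -invfM vlineZ //.
  have nzu : u * (a%:A + b%:A * w) != 0 by rewrite mulf_neq0.
  rewrite /inverted /pts_of is_point_line ?invr_eq0 //= inv_point_line ?invr_eq0 //.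
  rewrite invrK is_point_line //= -memvE; apply/pencil_memP.
  by exists a, b; rewrite mulrC.
Qed.

Lemma inverted_pencil_cubic u : u != 0 -> is_3uple_image (inverted (<[u]> + <[w * u]>)).
Proof.
move=> nu; exists (fun v => u^-1 * cubic_map v); split.
- by move=> k x y; rewrite cubic_map_linear mulrDr scalerAr.
- move=> x y /(congr1 (fun z => u * z)); rewrite !mulVKf // => e.
  apply/eqP; rewrite -subr_eq0; apply/eqP/cubic_map_eq0.
  by rewrite -[x - y]addrC -scaleN1r cubic_map_linear e scaleN1r addNr.
- by move=> P; apply: inverted_pencil.
Qed.

End TwistedCubic.

Section NonDesarguesianLines.
Variables (F : finFieldType) (L : fieldExtType F) (C : {subfield L}).
Hypotheses (dimL : \dim {:L} = 4%N) (dimC : \dim C = 2%N).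

Lemma line_basis (U : {vspace L}) :
  is_line U -> exists u v, u != 0 /\ U = (<[u]> + <[v]>)%VS.
Proof.
move=> /eqP dU; have bU := vbasisP U; have := basis_free bU.
have := span_basis bU; have : size (vbasis U : seq L) = 2 by rewrite size_tuple.
case: (vbasis U : seq L) => [|a [|b [|]]] //= _ spanU freeU.
exists a, b; split; first by apply: (free_not0 freeU); rewrite inE eqxx.
by rewrite -spanU span_def !big_cons big_nil addv0.
Qed.

(* An element outside C has degree 4 over F: its degree divides 4, is not 1
   (it is not in F, a subfield of C), and is not 2, since C is the unique
   subfield of order q^2, characterized by x^(q^2) = x. *)
Lemma degree_outside_C (w : L) : w \notin C -> adjoin_degree 1%AS w = 4%N.
Proof.
move=> wC; set n := adjoin_degree _ w.
have dimFw : \dim <<1%AS; w>>%AS = n by rewrite dim_Fadjoin dimv1 muln1.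
have n4 : (n %| 4)%N by rewrite -dimL -dimFw; apply/field_dimS/subvf.
have n1 : n != 1%N.
  by rewrite adjoin_deg_eq1; apply: contra wC => /(subvP (sub1v C)).
have n2 : n != 2%N.
  apply: contra wC => /eqP n2; rewrite (Fermat's_little_theorem C) dimC.
  have := Fermat's_little_theorem <<1%AS; w>>%AS w.
  by rewrite memv_adjoin /= dimFw n2 => <-.
by move: n n4 n1 n2 {dimFw} => [|[|[|[|[|k]]]]].
Qed.

(* The inverse of a line not in the Desarguesian spread is a twisted cubic:
   writing the line as <u, wu>, w lies outside C, hence has degree 4. *)
Lemma inverted_nondesarg_cubic (U : {vspace L}) :
  is_line U -> ~ in_desarg C U -> is_3uple_image (inverted U).
Proof.
move=> lU nD; have [u [v [nu DU]]] := line_basis lU.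
set w := v / u; have Dv : v = w * u by rewrite /w divfK.
have wC : w \notin C.
  apply/negP => Cw; apply: nD; exists u; split => //.
  apply/eqP; rewrite eqEdim dim_coset // dimC -(eqP lU) leqnn andbT DU subv_add.
  by rewrite -!memvE !memv_coset // divff // mem1v.
by rewrite DU Dv; apply/inverted_pencil_cubic/nu/degree_outside_C.
Qed.

End NonDesarguesianLines.

Section Spreads.
Variables (F : finFieldType) (L : fieldExtType F).
Local Notation FT := (finvect_type L).

Lemma card_nonzero_vectors (U : {vspace L}) :
  #|[pred x : FT | (x != 0) && (x \in U)]| = (#|F| ^ \dim U - 1)%N.
Proof.
rewrite -(card_vspace (U : {vspace FT})) [in RHS](cardD1 (0 : FT)) mem0v.
by rewrite add1n subSS subn0; apply: eq_card => x; rewrite !inE.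
Qed.

Lemma spread_count_vector (S : seq {vspace L}) (x : L) : line_spread S -> x != 0 ->
  count (fun U : {vspace L} => x \in U) S = 1%N.
Proof.
move=> [_ pS] nx; rewrite -(pS _ (is_point_line nx)) count_map.
by apply: eq_count => U; rewrite /= /pts_of is_point_line // memvE.
Qed.

(* A spread of PG(3, q) has q^2 + 1 lines: double counting the nonzero
   vectors gives q^4 - 1 = |S| (q^2 - 1). *)
Lemma spread_size (S : seq {vspace L}) :
  \dim {:L} = 4%N -> line_spread S -> size S = (#|F| ^ 2).+1.
Proof.
move=> dimL spS; have [/allP lS _] := spS; have q_gt1 := finNzRing_gt1 F.
suff E : (#|F| ^ 4 - 1 = size S * (#|F| ^ 2 - 1))%N.
  by move: q_gt1 E; move: #|F| (size S) => q s; clear; nia.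
transitivity (\sum_(x : FT | x != 0%R) \sum_(U <- S) (x \in U : nat))%N.
  rewrite -dimL -(card_nonzero_vectors fullv) -sum1_card.
  apply: eq_big => [x|x]; first by rewrite !inE memvf andbT.
  rewrite !inE memvf andbT => nx.
  by rewrite -(spread_count_vector spS nx) -sum1_count big_mkcond.
rewrite exchange_big /= -[size S]count_predT -sum1_count big_distrl /=.
apply: eq_big_seq => U /lS /eqP dU; rewrite mul1n -dU -card_nonzero_vectors.
by rewrite -big_mkcondr sum1_card; apply: eq_card => x; rewrite !inE andbC.
Qed.

(* A spread has no repeated line: a point of a repeated line would be
   covered twice. *)
Lemma spread_uniq (S : seq {vspace L}) : line_spread S -> uniq S.
Proof.
move=> [/allP lS pS]; apply: count_mem_uniq => U.
case US: (U \in S); last by apply/count_memPn; rewrite US.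
have nU : vpick U != 0 by rewrite vpick0; apply: contraTneq (lS U US) => ->; rewrite /is_line dimv0.
have pP := is_point_line nU; apply/eqP; rewrite eqn_leq -has_count has_pred1 US andbT.
apply: (leq_trans _ (eq_leq (pS _ pP))); rewrite count_map.
by apply: sub_count => V /eqP ->; rewrite /= /pts_of pP -memvE memv_pick.
Qed.

Lemma inverted_spread_partition (S : seq {vspace L}) (P : {vspace L}) :
  line_spread S -> is_point P -> count (fun U => inverted U P) S = 1%N.
Proof.
move=> [_ pS] pP; rewrite -(pS _ (inv_point_point pP)) count_map.
by apply: eq_count => U; rewrite /inverted pP.
Qed.

End Spreads.

(* Membership in a mapped sequence, stated with the [List.In] of the
   definition of a mixed partition. *)
Lemma In_mapP (T1 : eqType) (T2 : Type) (f : T1 -> T2) (s : seq T1) (y : T2) :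
  List.In y (map f s) -> exists2 x, x \in s & y = f x.
Proof.
elim: s => //= x s IHs [<-|/IHs[x' x's ->]]; first by exists x; rewrite ?mem_head.
by exists x'; rewrite // inE x's orbT.
Qed.

Lemma perm_cat_filter_notin (T : eqType) (s t : seq T) :
  uniq s -> uniq t -> {subset t <= s} -> perm_eq (t ++ [seq x <- s | x \notin t]) s.
Proof.
move=> us ut ts; apply: perm_trans (permEl (perm_filterC (mem t) s)).
apply: perm_cat (perm_refl _); apply: uniq_perm; rewrite ?filter_uniq // => x.
by rewrite mem_filter; apply/idP/andP => [xt|[]//]; split => //; apply: ts.
Qed.

Theorem mainTheorem6 (F : finFieldType) (L : fieldExtType F)
    (hL : \dim {:L} = 4%N) (C : {subfield L}) (hC : \dim C = 2%N)
    (r : nat) (hr : (r <= #|F| ^ 2)%N) :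
  (exists S : seq {vspace L},
      line_spread S /\
      (* T enumerates, without repetition, the lines of S lying in D *)
      exists T : seq {vspace L},
        [/\ uniq T, size T = r &
            forall U, U \in T <-> (U \in S /\ in_desarg C U)]) ->
  mixed_partition L r.
Proof.
move=> [S [spS [T [uT sizeT memT]]]]; have [/allP lS _] := spS.
have DT U : U \in T -> in_desarg C U by move=> /memT[].
pose S' := [seq U <- S | U \notin T].
have permS : perm_eq (T ++ S') S.
  by apply: perm_cat_filter_notin (spread_uniq spS) uT _ => U /memT[].
(* Invert every line of S: T gives lines of D, S' gives twisted cubics. *)
exists [seq desarg_inv C U | U <- T], [seq inverted U | U <- S']; split.
- by rewrite size_map.
- by apply/allP => _ /mapP[U /DT DU ->]; rewrite /is_line dim_desarg_inv ?hC.
- by rewrite size_map -(spread_size hL spS) -(perm_size permS) size_cat sizeT addKn.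
- move=> X /(In_mapP (f := @inverted _ L))[U]; rewrite mem_filter => /andP[nT US] ->.
  apply: (inverted_nondesarg_cubic hL hC (lS _ US)) => DU.
  by case/negP: nT; apply/memT.
- move=> P pP; rewrite count_cat !count_map.
  rewrite (@eq_in_count _ _ (fun U => inverted U P) T); last first.
    by move=> U /DT/pts_desarg_inv; apply.
  rewrite -count_cat (permP permS); exact: inverted_spread_partition.
Qed.
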